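(* Let $\Gamma$ be a weakly distance-regular digraph and let $q\ge3$ be an integer with $(1,q-1),(2,q-2)\in\tilde\partial(\Gamma)$. If $p_{(1,q-1),(1,q-1)}^{(2,q-2)}>0$, then every arc of type $(1,q-1)$ is contained in a circuit of length $q$ all of whose arcs are of type $(1,q-1)$.
   Context: Digraphs are finite and simple. $\partial(x,y)$ is the length of a shortest directed path from $x$ to $y$; $\tilde\partial(x,y)=(\partial(x,y),\partial(y,x))$; $\tilde\partial(\Gamma)$ is the set of all values $\tilde\partial(x,y)$; $\Gamma_{\tilde i}=\{(x,y):\tilde\partial(x,y)=\tilde i\}$. A strongly connected digraph $\Gamma$ is weakly distance-regular if $(V\Gamma,\{\Gamma_{\tilde i}\})$ is an association scheme, i.e. for all $\tilde i,\tilde j,\tilde l$ the number $p_{\tilde i,\tilde j}^{\tilde l}=|\{z:\tilde\partial(x,z)=\tilde i,\ \tilde\partial(z,y)=\tilde j\}|$ depends only on $\tilde l=\tilde\partial(x,y)$. An arc $(u,v)$ is of type $(1,r)$ if $\partial(v,u)=r$. A circuit of length $q$ is a closed directed path $(x_0,x_1,\dots,x_{q-1})$ with distinct vertices and arcs $(x_i,x_{i+1})$, indices mod $q$. *)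

From mathcomp Require Import all_boot.
Set Implicit Arguments. Unset Strict Implicit. Unset Printing Implicit Defensive.

(* A finite simple digraph: vertex set a finType T, arc relation adj,
   loopless (no multiple arcs automatically, since adj is a relation). *)
Definition simple_digraph (T : finType) (adj : rel T) : Prop :=
  irreflexive adj.

Fixpoint reach_in (T : finType) (adj : rel T) (n : nat) (x y : T) : bool :=
  match n with
  | 0 => x == y
  | n'.+1 => [exists z, adj x z && reach_in adj n' z y]
  end.

Definition strongly_connected (T : finType) (adj : rel T) : Prop :=
  forall x y : T, connect adj x y.

(* ∂(x,y): least n with a walk of length n from x to y (shortest walk =
   shortest path); searched among 0..#|T|-1, which suffices when y is
   reachable from x.  Returns #|T| if y is not reachable (never used). *)
Definition dist (T : finType) (adj : rel T) (x y : T) : nat :=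
  find (fun n => reach_in adj n x y) (iota 0 #|T|).

Definition tdist (T : finType) (adj : rel T) (x y : T) : nat * nat :=
  (dist adj x y, dist adj y x).

Definition in_tdist_set (T : finType) (adj : rel T) (i : nat * nat) : Prop :=
  exists x y : T, tdist adj x y = i.

Definition pcount (T : finType) (adj : rel T) (i j : nat * nat) (x y : T) : nat :=
  #|[set z | (tdist adj x z == i) && (tdist adj z y == j)]|.

Definition weakly_distance_regular (T : finType) (adj : rel T) : Prop :=
  simple_digraph adj /\ strongly_connected adj /\
  forall (i j : nat * nat) (x y x' y' : T),
    tdist adj x y = tdist adj x' y' -> pcount adj i j x y = pcount adj i j x' y'.

(* p^l_{i,j}: value of pcount at some (x,y) with ∂~(x,y) = l (0 if none). *)
Definition pnum (T : finType) (adj : rel T) (i j l : nat * nat) : nat :=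
  match [pick xy : T * T | tdist adj xy.1 xy.2 == l] with
  | Some xy => pcount adj i j xy.1 xy.2
  | None => 0
  end.

Definition arc_of_type (T : finType) (adj : rel T) (r : nat) (u v : T) : Prop :=
  adj u v /\ dist adj v u = r.

Definition circuit (T : finType) (adj : rel T) (q : nat) (s : seq T) : Prop :=
  size s = q /\ uniq s /\
  forall (x0 : T) (i : nat), i < q -> adj (nth x0 s i) (nth x0 s ((i.+1) %% q)).

From mathcomp Require Import all_boot.
From mathcomp Require Import zify.
Set Implicit Arguments. Unset Strict Implicit. Unset Printing Implicit Defensive.

(* Consider closed walks x_0, x_1, ..., x_q = x_0 starting with the given arc
   (u, v) = (x_0, x_1).  As d(x_1, x_0) = q - 1, the segment x_1 ... x_q must be a
   geodesic, so such a walk is a circuit.  A first walk, whose first two arcs have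
   type (1, q-1), comes from a vertex w with d~(v, w) = (1, q-1) and
   d~(w, u) = (q-2, 2), followed by a shortest path from w to u; w exists because
   rotating a triangle counted by p^(2,q-2)_(1,q-1),(1,q-1) gives a triangle of
   shape (q-1, 1) with sides (1, q-1), (q-2, 2).  If the first j + 1 >= 2 arcs have
   type (1, q-1), then d~(x_j, x_(j+2)) = (2, q-2), and a vertex counted by
   p^(2,q-2)_(1,q-1),(1,q-1) can replace x_(j+1), so that the first j + 2 arcs
   have type (1, q-1). *)

Section Distance.
Variables (T : finType) (adj : rel T).

Lemma reach_in_walk (g : nat -> T) i n :
  (forall k, i <= k < i + n -> adj (g k) (g k.+1)) ->
  reach_in adj n (g i) (g (i + n)).
Proof.
elim: n i => [|n IH] i arcs /=; first by rewrite addn0.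
apply/existsP; exists (g i.+1); rewrite arcs ?leqnn ?addnS ?ltnS ?leq_addr //=.
rewrite -addSn; apply: IH => k /andP [ik kn]; apply: arcs.
by rewrite (ltnW ik) addnS -addSn.
Qed.

Lemma reach_in_add m n x y z :
  reach_in adj m x y -> reach_in adj n y z -> reach_in adj (m + n) x z.
Proof.
elim: m x => [|m IH] x /=; first by move=> /eqP ->.
by case/existsP=> w /andP [xw wy] yz; apply/existsP; exists w; rewrite xw IH.
Qed.

Lemma reach_in_fun n x y :
  reach_in adj n x y ->
  exists g : nat -> T, [/\ g 0 = x, g n = y & forall k, k < n -> adj (g k) (g k.+1)].
Proof.
elim: n x => [|n IH] x /=; first by move=> /eqP ->; exists (fun=> y).
case/existsP=> z /andP [xz /IH [g [g0 gn arcs]]].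
exists (fun k => if k is k'.+1 then g k' else x); split=> // -[|k] /=.
  by rewrite g0.
exact: arcs.
Qed.

Lemma reach_in_path x p : path adj x p -> reach_in adj (size p) x (last x p).
Proof.
elim: p x => [|y p IH] x /=; first by rewrite eqxx.
by case/andP=> xy /IH reach; apply/existsP; exists y; rewrite xy.
Qed.

Lemma dist_le n x y : reach_in adj n x y -> dist adj x y <= n.
Proof.
move=> reach; rewrite /dist; have [ltnT|leTn] := ltnP n #|T|.
  rewrite leqNgt; apply/negP => /(before_find 0).
  by rewrite nth_iota // add0n reach.
by apply: leq_trans (find_size _ _) _; rewrite size_iota.
Qed.

(* A shortest walk is a path, so its length is below #|T| and [dist] finds it. *)
Lemma dist_reach x y : connect adj x y -> reach_in adj (dist adj x y) x y.
Proof.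
case/connectP=> p /shortenP [p' walk' uniq' _] ->.
have short : size p' < #|T|.
  by move/card_uniqP: uniq' => /= <-; apply: max_card.
have found : has (fun n => reach_in adj n x (last x p')) (iota 0 #|T|).
  by apply/hasP; exists (size p'); rewrite ?mem_iota ?reach_in_path.
have := nth_find 0 found; rewrite has_find size_iota in found.
by rewrite nth_iota.
Qed.

Lemma dist_walk_le (g : nat -> T) i n :
  (forall k, i <= k < i + n -> adj (g k) (g k.+1)) ->
  dist adj (g i) (g (i + n)) <= n.
Proof. by move/reach_in_walk/dist_le. Qed.

Lemma distxx x : dist adj x x = 0.
Proof. by apply/eqP; rewrite -leqn0; apply: (@dist_le 0) => /=. Qed.

Hypothesis sc : strongly_connected adj.

Lemma dist_triangle x y z : dist adj x z <= dist adj x y + dist adj y z.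
Proof. by apply: dist_le; apply: reach_in_add; apply: dist_reach. Qed.

Lemma dist_eq0 x y : dist adj x y = 0 -> x = y.
Proof. by move=> d0; have := dist_reach (sc x y); rewrite d0 => /eqP. Qed.

Lemma dist_eq1 x y : dist adj x y = 1 -> adj x y.
Proof.
by move=> d1; have := dist_reach (sc x y); rewrite d1 => /existsP [z /andP [xz /eqP <-]].
Qed.

Lemma adj_dist1 x y : irreflexive adj -> adj x y -> dist adj x y = 1.
Proof.
move=> irr xy; have : dist adj x y <= 1.
  by apply: dist_le; apply/existsP; exists y; rewrite xy /=.
case: (dist adj x y) (@dist_eq0 x y) => [/(_ erefl) exy|[|//]] // _.
by move: xy; rewrite exy irr.
Qed.

End Distance.

Definition closed_walk (T : finType) (adj : rel T) (q : nat) (f : nat -> T) : Prop :=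
  f q = f 0 /\ forall i, i < q -> adj (f i) (f i.+1).

Section ClosedWalk.
Variables (T : finType) (adj : rel T) (q : nat) (f : nat -> T).
Hypotheses (sc : strongly_connected adj) (walk : closed_walk adj q f).

Lemma closed_walk_dist_le i k : i <= k -> k <= q -> dist adj (f i) (f k) <= k - i.
Proof.
move=> ik kq; have := @dist_walk_le _ adj f i (k - i); rewrite subnKC //.
by apply=> l /andP [_ lk]; apply: walk.2; rewrite (leq_trans lk).
Qed.

Lemma closed_walk_dist_around i k : i <= k -> k <= q -> dist adj (f k) (f i) <= q - k + i.
Proof.
move=> ik kq; have := dist_triangle sc (f k) (f q) (f i).
have := closed_walk_dist_le kq (leqnn q).
have := closed_walk_dist_le (leq0n i) (leq_trans ik kq).
rewrite walk.1; lia.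
Qed.

Hypothesis back : dist adj (f 1) (f 0) = q - 1.

Lemma closed_walk_geodesic i k : 0 < i -> i <= k -> k <= q -> dist adj (f i) (f k) = k - i.
Proof.
move=> i0 ik kq; apply/eqP; rewrite eqn_leq closed_walk_dist_le //=.
have := dist_triangle sc (f 1) (f i) (f 0).
have := dist_triangle sc (f i) (f k) (f 0).
have := closed_walk_dist_le i0 (leq_trans ik kq).
have := closed_walk_dist_le kq (leqnn q).
rewrite back -walk.1; lia.
Qed.

Lemma closed_walk_neq i k : i < k -> k < q -> f i != f k.
Proof.
move=> ik kq; apply/eqP; case: i ik => [|i] ik fik.
  by have := closed_walk_geodesic ik (ltnW kq) (leqnn q); rewrite walk.1 fik distxx; lia.
by have := closed_walk_geodesic (ltn0Sn i) (ltnW ik) (ltnW kq); rewrite fik distxx; lia.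
Qed.

Lemma closed_walk_uniq : uniq (mkseq f q).
Proof.
rewrite /mkseq map_inj_in_uniq ?iota_uniq // => i k; rewrite !mem_iota !add0n.
move=> /andP [_ iq] /andP [_ kq] fik; case: (ltngtP i k) => // [ik | ki].
  by have := closed_walk_neq ik kq; rewrite fik eqxx.
by have := closed_walk_neq ki iq; rewrite fik eqxx.
Qed.

Lemma nth_closed_walk x0 i : i < q -> nth x0 (mkseq f q) (i.+1 %% q) = f i.+1.
Proof.
move=> iq; have [iSq|] := ltnP i.+1 q; first by rewrite modn_small ?nth_mkseq.
move=> qi; have -> : i.+1 = q by apply/eqP; rewrite eqn_leq iq qi.
by rewrite modnn nth_mkseq ?walk.1 // (leq_ltn_trans (leq0n i) iq).
Qed.

End ClosedWalk.

Definition typed_closed_walk (T : finType) (adj : rel T) (q : nat) (u v : T) (k : nat) :=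
  exists f : nat -> T, [/\ f 0 = u, f 1 = v, closed_walk adj q f &
    forall i, i < k -> dist adj (f i.+1) (f i) = q - 1].

Lemma pcount_pnum (T : finType) (adj : rel T) i j l x y :
  weakly_distance_regular adj -> tdist adj x y = l -> pcount adj i j x y = pnum adj i j l.
Proof.
move=> [_ [_ regular]] xyl; rewrite /pnum; case: pickP => [[x' y'] /eqP /= xyl'|none].
  by apply: regular; rewrite xyl xyl'.
by have := none (x, y); rewrite /= xyl eqxx.
Qed.

Lemma pcount_gt0_rotate (T : finType) (adj : rel T) i j x y :
  0 < pcount adj i j x y ->
  exists2 z, tdist adj x z = i & 0 < pcount adj j (tdist adj y x) z x.
Proof.
case/card_gt0P=> z; rewrite inE => /andP [/eqP xz /eqP zy]; exists z => //.
by apply/card_gt0P; exists y; rewrite inE zy !eqxx.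
Qed.

Section WeaklyDistanceRegular.
Variables (T : finType) (adj : rel T) (q : nat).
Hypotheses (wdr : weakly_distance_regular adj) (q3 : 3 <= q)
  (p_gt0 : 0 < pnum adj (1, q - 1) (1, q - 1) (2, q - 2)).

Let irr : irreflexive adj := wdr.1.
Let sc : strongly_connected adj := wdr.2.1.

Lemma pcount_gt0 x y :
  tdist adj x y = (2, q - 2) -> 0 < pcount adj (1, q - 1) (1, q - 1) x y.
Proof. by move/(pcount_pnum (1, q - 1) (1, q - 1) wdr) ->. Qed.

Lemma typed_closed_walk2 u v :
  in_tdist_set adj (2, q - 2) -> arc_of_type adj (q - 1) u v ->
  typed_closed_walk adj q u v 2.
Proof.
move=> [x [y xy]] [uv vu].
have [z xz] := pcount_gt0_rotate (pcount_gt0 xy).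
have -> : tdist adj y x = (q - 2, 2) by move: xy; rewrite /tdist => -[-> ->].
have zx_vu : tdist adj z x = tdist adj v u.
  by move: xz; rewrite /tdist vu (adj_dist1 sc irr uv) => -[-> ->].
rewrite (wdr.2.2 _ _ _ _ _ _ zx_vu) => /card_gt0P [w].
rewrite inE /tdist => /andP [/eqP [vw wv] /eqP [wu _]].
have [g [g0 gu arcs]] := reach_in_fun (dist_reach (sc w u)); rewrite wu in gu arcs.
exists (fun i => match i with 0 => u | 1 => v | i.+2 => g i end); split=> //.
  split=> [|[|[|i]] iq /=]; first by rewrite (_ : q = (q - 2).+2) //; lia.
  - exact: uv.
  - by rewrite g0 dist_eq1.
  - by apply: arcs; lia.
by case=> [|[|i]] //= _; rewrite g0.
Qed.

Lemma typed_closed_walk_step u v j :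
  0 < j -> j.+2 <= q ->
  typed_closed_walk adj q u v j.+1 -> typed_closed_walk adj q u v j.+2.
Proof.
move=> j0 jq [f [f0 f1 walk typed]].
have back := typed 0 (ltn0Sn j).
have forth : dist adj (f j) (f j.+2) = 2.
  by rewrite (closed_walk_geodesic sc walk back) //; lia.
have backward : dist adj (f j.+2) (f j) = q - 2.
  have := closed_walk_dist_around sc walk (leq_trans (leqnSn j) (leqnSn j.+1)) jq.
  have := dist_triangle sc (f j.+1) (f j.+2) (f j).
  rewrite typed // (adj_dist1 sc irr (walk.2 _ jq)); lia.
have /card_gt0P [m] : 0 < pcount adj (1, q - 1) (1, q - 1) (f j) (f j.+2).
  by apply: pcount_gt0; rewrite /tdist forth backward.
rewrite inE /tdist => /andP [/eqP [jm mj] /eqP [mj2 j2m]].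
pose g i := if i == j.+1 then m else f i.
have gE i : i != j.+1 -> g i = f i by rewrite /g => /negbTE ->.
have gm : g j.+1 = m by rewrite /g eqxx.
have j1 : j != j.+1 by lia.
have j2 : j.+2 != j.+1 by lia.
exists g; split.
- by rewrite gE //; lia.
- by rewrite gE //; lia.
- split=> [|i iq]; first by rewrite !gE ?walk.1 //; lia.
  have [-> | ij] := eqVneq i j; first by rewrite gm gE // dist_eq1.
  have [-> | ij1] := eqVneq i j.+1; first by rewrite gm gE // dist_eq1.
  by rewrite !gE ?eqSS //; apply: walk.2.
- move=> i ij2.
  have [-> | ij] := eqVneq i j; first by rewrite gm gE.
  have [-> | ij1] := eqVneq i j.+1; first by rewrite gm gE.
  by rewrite !gE ?eqSS //; apply: typed; lia.
Qed.

Lemma typed_closed_walk_full u v :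
  in_tdist_set adj (2, q - 2) -> arc_of_type adj (q - 1) u v ->
  typed_closed_walk adj q u v q.
Proof.
move=> class2 uv.
have typed_j j : j.+2 <= q -> typed_closed_walk adj q u v j.+2.
  elim: j => [|j IH] jq; first exact: typed_closed_walk2.
  by apply: typed_closed_walk_step => //; apply/IH/ltnW.
by have := typed_j (q - 2); rewrite -addn2 subnK; [apply | apply: ltnW].
Qed.

End WeaklyDistanceRegular.

Theorem lemma2p6 (T : finType) (adj : rel T) (q : nat) :
  weakly_distance_regular adj ->
  3 <= q ->
  in_tdist_set adj (1, q - 1) ->
  in_tdist_set adj (2, q - 2) ->
  0 < pnum adj (1, q - 1) (1, q - 1) (2, q - 2) ->
  forall u v : T, arc_of_type adj (q - 1) u v ->
    exists s : seq T,
      circuit adj q s /\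
      (exists2 i, i < q & nth u s i = u /\ nth u s ((i.+1) %% q) = v) /\
      (forall i, i < q ->
         arc_of_type adj (q - 1) (nth u s i) (nth u s ((i.+1) %% q))).
Proof.
move=> wdr q3 _ class2 p_gt0 u v uv.
have [f [f0 f1 walk typed]] := typed_closed_walk_full wdr q3 p_gt0 class2 uv.
have q0 : 0 < q by apply: leq_trans q3.
exists (mkseq f q); split; [split; [|split] | split].
- by rewrite size_mkseq.
- exact: closed_walk_uniq wdr.2.1 walk (typed 0 q0).
- by move=> x0 i iq; rewrite nth_mkseq // (nth_closed_walk walk) //; apply: walk.2.
- by exists 0; rewrite // nth_mkseq // (nth_closed_walk walk).
- by move=> i iq; rewrite nth_mkseq // (nth_closed_walk walk) //; split; [apply: walk.2 | apply: typed].
Qed.
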